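(* Let $\lambda>0$ and $X\sim\mathrm{ZTP}(\lambda)$. Then the Gini coefficient of $X$ is $$G = 1 - \frac{2e^{-\lambda}}{1-e^{-\lambda}}\int_0^\lambda I_0\big(2\sqrt{\lambda t}\big)\,e^{-t}\,dt + \frac{e^{-2\lambda}}{1-e^{-\lambda}}\, I_1(2\lambda).$$
   Context: A random variable $X$ has the zero-truncated Poisson distribution with parameter $\lambda>0$, written $X\sim\mathrm{ZTP}(\lambda)$, if $P_\lambda(k)=\mathbb{P}(X=k)=\frac{1}{1-e^{-\lambda}}\cdot\frac{e^{-\lambda}\lambda^k}{k!}$ for $k=1,2,\ldots$. Its mean is $\mu=\lambda/(1-e^{-\lambda})$. The Gini coefficient of a random variable $X$ with finite mean is $G=\frac12\,\mathbb{E}|X_1-X_2|/\mathbb{E}(X)$, where $X_1,X_2$ are independent copies of $X$. $I_\nu(z)=(z/2)^\nu\sum_{k\ge0}(z/2)^{2k}/[k!\,\Gamma(\nu+k+1)]$ is the modified Bessel function of the first kind of order $\nu$. *)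

From Stdlib Require Import Reals Factorial.
From Coquelicot Require Import Coquelicot.
Open Scope R_scope.

Definition ztp_pmf (lam : R) (k : nat) : R :=
  match k with
  | O => 0
  | S _ => / (1 - exp (- lam)) * (exp (- lam) * lam ^ k / INR (fact k))
  end.

Definition mean_nat (p : nat -> R) : R :=
  Series (fun k => INR k * p k).

(* Mean absolute difference E|X1 - X2| for independent copies X1, X2 with pmf p
   (series of nonnegative terms, so the iterated sum is the double sum). *)
Definition mean_abs_diff_nat (p : nat -> R) : R :=
  Series (fun j => Series (fun k => Rabs (INR j - INR k) * (p j * p k))).

Definition gini_nat (p : nat -> R) : R :=
  / 2 * mean_abs_diff_nat p / mean_nat p.

(* Modified Bessel function of the first kind I_n of integer order n >= 0:
   I_n(z) = sum_k (z/2)^(n+2k) / (k! Gamma(n+k+1)), with Gamma(n+k+1) = (n+k)!. *)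
Definition bessel_I (n : nat) (z : R) : R :=
  Series (fun k => (z / 2) ^ (n + 2 * k) / (INR (fact k) * INR (fact (n + k)))).

From Stdlib Require Import Reals Factorial Lra Lia.
From Coquelicot Require Import Coquelicot.
Open Scope R_scope.

(* For a law [a] on the naturals with mean [mu], the identity
   [|j - k| = (k - j) + 2 (j - k)^+] gives [sum_k |j - k| a_k = mu - j + 2 L_j] with
   [L_j = E[(j - X)^+]], hence [E|X1 - X2| = 2 sum_j a_j L_j].  For the zero-truncated
   Poisson law, [L_j] is explicit in the Poisson pmf [p] and cdf [F], and the recurrence
   [j p_j = lam p_(j-1)] together with the telescoping [p_j (2 F_j - p_j) = F_j^2 - F_(j-1)^2]
   reduce [sum_j a_j L_j] to [lam (2 A + B - 1 - e^-lam) / (1 - e^-lam)^2], where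
   [A = sum_j p_j F_j] and [B = sum_j p_j p_(j+1)].  Termwise, [B = e^(-2 lam) I_1(2 lam)].
   Finally [I_0(2 sqrt(lam t)) e^-t = sum_k (lam^k / k!) P(Poisson(t) = k)], and integrating
   termwise with [int_0^lam P(Poisson(t) = k) dt = P(Poisson(lam) > k)] yields
   [e^-lam int_0^lam I_0(2 sqrt(lam t)) e^-t dt = 1 - A]. *)

Lemma is_series_ext_R (a b : nat -> R) (l : R) :
  (forall n, a n = b n) -> is_series a l -> is_series b l.
Proof. apply is_series_ext. Qed.

Lemma is_series_decr_1_R (a : nat -> R) (l : R) :
  is_series (fun k => a (S k)) (l - a 0%nat) -> is_series a l.
Proof. exact (is_series_decr_1 a l). Qed.

Lemma is_series_incr_1_R (a : nat -> R) (l : R) :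
  is_series a l -> is_series (fun k => a (S k)) (l - a 0%nat).
Proof.
  intro H. assert (E : l = plus (l - a 0%nat) (a 0%nat)) by (unfold plus; simpl; ring).
  rewrite E in H. exact (is_series_incr_1 a _ H).
Qed.

Lemma is_series_truncated (a : nat -> R) (n : nat) :
  is_series (fun k => if (k <=? n)%nat then a k else 0) (sum_n a n).
Proof.
  change (is_lim_seq (sum_n (fun k => if (k <=? n)%nat then a k else 0)) (sum_n a n)).
  apply is_lim_seq_ext_loc with (fun _ => sum_n a n); [|apply is_lim_seq_const].
  exists n. intros m Hm. induction Hm as [|m Hm IH].
  - apply sum_n_ext_loc. intros k Hk. apply Nat.leb_le in Hk. now rewrite Hk.
  - rewrite sum_Sn, IH. replace (S m <=? n)%nat with false by (symmetry; apply Nat.leb_gt; lia).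
    symmetry. apply Rplus_0_r.
Qed.

Lemma Series_tail_le (a b : nat -> R) (n : nat) :
  (forall k, 0 <= a k <= b k) -> ex_series a -> ex_series b ->
  0 <= Series a - sum_n a n <= Series b - sum_n b n.
Proof.
  intros Hab Ha Hb. split.
  - enough (sum_n a n <= Series a) by lra.
    apply (is_lim_seq_incr_compare (sum_n a)); [exact (Series_correct a Ha)|].
    intro k. rewrite sum_Sn. specialize (Hab (S k)). unfold plus; simpl. lra.
  - enough (sum_n b n - sum_n a n <= Series b - Series a) by lra.
    apply (is_lim_seq_incr_compare (fun N => sum_n b N - sum_n a N)).
    + exact (is_lim_seq_minus' _ _ _ _ (Series_correct b Hb) (Series_correct a Ha)).
    + intro k. rewrite !sum_Sn. specialize (Hab (S k)). unfold plus; simpl. lra.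
Qed.

Lemma CV_radius_infinite (a : nat -> R) : (forall r, CV_disk a r) -> CV_radius a = p_infty.
Proof.
  intro Ha. destruct (Lub_Rbar_correct (CV_disk a)) as [Hub _]. revert Hub.
  unfold CV_radius. destruct (Lub_Rbar (CV_disk a)) as [l| |]; intro Hub.
  - specialize (Hub (l + 1) (Ha _)). simpl in Hub. lra.
  - reflexivity.
  - destruct (Hub 0 (Ha 0)).
Qed.

Lemma is_series_exp (x : R) : is_series (fun n => x ^ n / INR (fact n)) (exp x).
Proof.
  apply (is_series_ext (fun n => / INR (fact n) * x ^ n)).
  - intro n. apply Rmult_comm.
  - exact (proj1 (is_pseries_R _ _ _) (is_exp_Reals x)).
Qed.

Lemma is_RInt_sum_n (f : nat -> R -> R) (I : nat -> R) (a b : R) (N : nat) :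
  (forall k, is_RInt (f k) a b (I k)) ->
  is_RInt (fun t => sum_n (fun k => f k t) N) a b (sum_n I N).
Proof.
  intro HI. induction N as [|N IH].
  - rewrite sum_O. apply (is_RInt_ext (f 0%nat)); [intros; now rewrite sum_O | apply HI].
  - rewrite sum_Sn. apply (is_RInt_ext (fun t => plus (sum_n (fun k => f k t) N) (f (S N) t))).
    + intros. now rewrite sum_Sn.
    + exact (is_RInt_plus _ _ _ _ _ _ IH (HI (S N))).
Qed.

Lemma is_series_RInt_uniform (f : nat -> R -> R) (h : R -> R) (I r : nat -> R) (a b : R) :
  a <= b -> ex_RInt h a b -> (forall k, is_RInt (f k) a b (I k)) ->
  (forall N t, a <= t <= b -> Rabs (h t - sum_n (fun k => f k t) N) <= r N) ->
  is_lim_seq r 0 -> is_series I (RInt h a b).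
Proof.
  intros Hab Hh HI Hr Hr0. set (J := RInt h a b).
  assert (Hbound : forall N, Rabs (J - sum_n I N) <= (b - a) * r N).
  { intro N.
    assert (HD := is_RInt_minus _ _ _ _ _ _ (RInt_correct _ _ _ Hh) (is_RInt_sum_n f I a b N HI)).
    rewrite <- (Rabs_pos_eq (b - a)) by lra.
    refine (norm_RInt_le_const_abs _ _ _ _ _ _ HD).
    rewrite Rmin_left, Rmax_right by lra. exact (Hr N). }
  change (is_lim_seq (sum_n I) J).
  assert (Hr0' : is_lim_seq (fun N => (b - a) * r N) 0).
  { replace (Finite 0) with (Rbar_mult (b - a) 0) by (simpl; f_equal; ring).
    exact (is_lim_seq_scal_l _ _ _ Hr0). }
  apply is_lim_seq_le_le with (fun N => J - (b - a) * r N) (fun N => J + (b - a) * r N).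
  - intro N. specialize (Hbound N). apply Rabs_le_between in Hbound. lra.
  - replace (Finite J) with (Finite (J - 0)) by (f_equal; ring).
    exact (is_lim_seq_minus' _ _ _ _ (is_lim_seq_const J) Hr0').
  - replace (Finite J) with (Finite (J + 0)) by (f_equal; ring).
    exact (is_lim_seq_plus' _ _ _ _ (is_lim_seq_const J) Hr0').
Qed.

Definition lower_partial_moment (a : nat -> R) (j : nat) : R :=
  sum_n (fun k => (INR j - INR k) * a k) j.

Lemma lower_partial_moment_O (a : nat -> R) : lower_partial_moment a 0 = 0.
Proof. unfold lower_partial_moment. rewrite sum_O. simpl. ring. Qed.

Lemma lower_partial_moment_S (a : nat -> R) (j : nat) :
  lower_partial_moment a (S j) = lower_partial_moment a j + sum_n a j.
Proof.
  unfold lower_partial_moment. rewrite sum_Sn, Rminus_diag, Rmult_0_l.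
  rewrite (sum_n_ext _ (fun k => plus ((INR j - INR k) * a k) (a k))).
  - rewrite sum_n_plus. unfold plus; simpl. ring.
  - intro k. rewrite S_INR. unfold plus; simpl. ring.
Qed.

Lemma is_series_abs_moment (a : nat -> R) (s mu : R) (j : nat) :
  is_series a s -> is_series (fun k => INR k * a k) mu ->
  is_series (fun k => Rabs (INR j - INR k) * a k)
    (mu - INR j * s + 2 * lower_partial_moment a j).
Proof.
  intros Ha Hmu.
  apply (is_series_ext_R (fun k => INR k * a k - INR j * a k
           + 2 * (if (k <=? j)%nat then (INR j - INR k) * a k else 0))).
  - intro k. destruct (Nat.leb_spec k j) as [Hkj|Hkj].
    + apply le_INR in Hkj. rewrite Rabs_pos_eq by lra. ring.
    + apply lt_INR in Hkj. rewrite Rabs_left by lra. ring.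
  - exact (is_series_plus _ _ _ _ (is_series_minus _ _ _ _ Hmu (is_series_scal_l _ _ _ Ha))
             (is_series_scal_l _ _ _ (is_series_truncated _ j))).
Qed.

Lemma gini_nat_of_lower_partial_moments (a : nat -> R) (mu W : R) :
  is_series a 1 -> is_series (fun k => INR k * a k) mu ->
  is_series (fun j => a j * lower_partial_moment a j) W ->
  gini_nat a = W / mu.
Proof.
  intros Ha Hmu HW.
  assert (Hmad : mean_abs_diff_nat a = 2 * W).
  { unfold mean_abs_diff_nat.
    rewrite (Series_ext _ (fun j => a j * mu - INR j * a j + 2 * (a j * lower_partial_moment a j))).
    - apply is_series_unique.
      replace (2 * W) with (1 * mu - mu + 2 * W) by ring.
      exact (is_series_plus _ _ _ _ (is_series_minus _ _ _ _ (is_series_scal_r _ _ _ Ha) Hmu)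
               (is_series_scal_l _ _ _ HW)).
    - intro j. apply is_series_unique.
      replace (a j * mu - INR j * a j + 2 * (a j * lower_partial_moment a j))
        with (a j * (mu - INR j * 1 + 2 * lower_partial_moment a j)) by ring.
      apply (is_series_ext_R (fun k => a j * (Rabs (INR j - INR k) * a k))); [intro k; ring|].
      exact (is_series_scal_l _ _ _ (is_series_abs_moment a 1 mu j Ha Hmu)). }
  unfold gini_nat, mean_nat. rewrite Hmad, (is_series_unique _ _ Hmu).
  replace (/ 2 * (2 * W)) with W by field. reflexivity.
Qed.

Definition poisson_pmf (lam : R) (k : nat) : R := exp (- lam) * lam ^ k / INR (fact k).

Definition poisson_cdf (lam : R) (n : nat) : R := sum_n (poisson_pmf lam) n.

Lemma poisson_pmf_ge0 (lam : R) (k : nat) : 0 <= lam -> 0 <= poisson_pmf lam k.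
Proof.
  intro Hl. unfold poisson_pmf, Rdiv.
  apply Rmult_le_pos; [apply Rmult_le_pos; [left; apply exp_pos | now apply pow_le]|].
  left. apply Rinv_0_lt_compat, INR_fact_lt_0.
Qed.

Lemma poisson_pmf_O (lam : R) : poisson_pmf lam 0 = exp (- lam).
Proof. unfold poisson_pmf. simpl. field. Qed.

Lemma poisson_pmf_S (lam : R) (k : nat) :
  INR (S k) * poisson_pmf lam (S k) = lam * poisson_pmf lam k.
Proof.
  unfold poisson_pmf. rewrite fact_simpl, mult_INR. simpl pow.
  field. split; [apply INR_fact_neq_0 | apply not_0_INR; lia].
Qed.

Lemma is_series_poisson_pmf (lam : R) : is_series (poisson_pmf lam) 1.
Proof.
  replace 1 with (exp (- lam) * exp lam) by (rewrite <- exp_plus, Rplus_opp_l; apply exp_0).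
  apply (is_series_ext_R (fun k => exp (- lam) * (lam ^ k / INR (fact k)))).
  - intro k. unfold poisson_pmf, Rdiv. ring.
  - exact (is_series_scal_l _ _ _ (is_series_exp lam)).
Qed.

Lemma is_series_poisson_mean (lam : R) :
  is_series (fun k => INR k * poisson_pmf lam k) lam.
Proof.
  apply is_series_decr_1_R. replace (lam - INR 0 * poisson_pmf lam 0) with (lam * 1) by (simpl; ring).
  apply (is_series_ext_R (fun k => lam * poisson_pmf lam k)).
  - intro k. now rewrite poisson_pmf_S.
  - exact (is_series_scal_l _ _ _ (is_series_poisson_pmf lam)).
Qed.

Lemma poisson_cdf_O (lam : R) : poisson_cdf lam 0 = poisson_pmf lam 0.
Proof. apply sum_O. Qed.

Lemma poisson_cdf_S (lam : R) (n : nat) :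
  poisson_cdf lam (S n) = poisson_cdf lam n + poisson_pmf lam (S n).
Proof. unfold poisson_cdf. rewrite sum_Sn. reflexivity. Qed.

Lemma poisson_cdf_ge0 (lam : R) (n : nat) : 0 <= lam -> 0 <= poisson_cdf lam n.
Proof.
  intro Hl. induction n as [|n IH].
  - rewrite poisson_cdf_O. now apply poisson_pmf_ge0.
  - rewrite poisson_cdf_S. generalize (poisson_pmf_ge0 lam (S n) Hl). lra.
Qed.

Lemma poisson_cdf_le1 (lam : R) (n : nat) : 0 <= lam -> poisson_cdf lam n <= 1.
Proof.
  intro Hl. apply (is_lim_seq_incr_compare (poisson_cdf lam)); [exact (is_series_poisson_pmf lam)|].
  intro k. rewrite poisson_cdf_S. generalize (poisson_pmf_ge0 lam (S k) Hl). lra.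
Qed.

Lemma poisson_pmf_le1 (lam : R) (n : nat) : 0 <= lam -> poisson_pmf lam n <= 1.
Proof.
  intro Hl. destruct n as [|n].
  - rewrite <- poisson_cdf_O. now apply poisson_cdf_le1.
  - generalize (poisson_cdf_le1 lam (S n) Hl) (poisson_cdf_ge0 lam n Hl).
    rewrite poisson_cdf_S. lra.
Qed.

Lemma ex_series_poisson_pmf_mul (lam : R) (w : nat -> R) :
  0 <= lam -> (forall j, 0 <= w j <= 1) -> ex_series (fun j => poisson_pmf lam j * w j).
Proof.
  intros Hl Hw. apply (@ex_series_le R_AbsRing R_CompleteNormedModule _ (poisson_pmf lam)).
  - intro j. destruct (Hw j). generalize (poisson_pmf_ge0 lam j Hl). intro.
    change (Rabs (poisson_pmf lam j * w j) <= poisson_pmf lam j).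
    rewrite Rabs_pos_eq by nra. nra.
  - exists 1. apply is_series_poisson_pmf.
Qed.

Definition poisson_le_prob (lam : R) : R :=
  Series (fun j => poisson_pmf lam j * poisson_cdf lam j).

Definition poisson_succ_prob (lam : R) : R :=
  Series (fun j => poisson_pmf lam j * poisson_pmf lam (S j)).

Lemma is_series_poisson_le_prob (lam : R) : 0 <= lam ->
  is_series (fun j => poisson_pmf lam j * poisson_cdf lam j) (poisson_le_prob lam).
Proof.
  intro Hl. apply Series_correct, ex_series_poisson_pmf_mul; [exact Hl|].
  intro j. split; [apply poisson_cdf_ge0 | apply poisson_cdf_le1]; exact Hl.
Qed.

Lemma is_series_poisson_succ_prob (lam : R) : 0 <= lam ->
  is_series (fun j => poisson_pmf lam j * poisson_pmf lam (S j)) (poisson_succ_prob lam).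
Proof.
  intro Hl. apply Series_correct, ex_series_poisson_pmf_mul; [exact Hl|].
  intro j. split; [apply poisson_pmf_ge0 | apply poisson_pmf_le1]; exact Hl.
Qed.

Lemma sum_n_poisson_telescope (lam : R) (n : nat) :
  sum_n (fun j => poisson_pmf lam j * (2 * poisson_cdf lam j - poisson_pmf lam j)) n
  = poisson_cdf lam n * poisson_cdf lam n.
Proof.
  induction n as [|n IH].
  - rewrite sum_O, poisson_cdf_O. simpl. ring.
  - rewrite sum_Sn, IH, !poisson_cdf_S. unfold plus; simpl. ring.
Qed.

Lemma is_series_poisson_pmf_sq (lam : R) : 0 <= lam ->
  is_series (fun j => poisson_pmf lam j ^ 2) (2 * poisson_le_prob lam - 1).
Proof.
  intro Hl.
  assert (Htel : is_series (fun j => poisson_pmf lam j * (2 * poisson_cdf lam j - poisson_pmf lam j)) 1).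
  { change (is_lim_seq (sum_n (fun j => poisson_pmf lam j * (2 * poisson_cdf lam j - poisson_pmf lam j))) 1).
    apply (is_lim_seq_ext (fun n => poisson_cdf lam n * poisson_cdf lam n)).
    - intro n. symmetry. apply sum_n_poisson_telescope.
    - replace (Finite 1) with (Finite (1 * 1)) by (f_equal; ring).
      exact (is_lim_seq_mult' _ _ _ _ (is_series_poisson_pmf lam) (is_series_poisson_pmf lam)). }
  apply (is_series_ext_R (fun j => 2 * (poisson_pmf lam j * poisson_cdf lam j)
           - poisson_pmf lam j * (2 * poisson_cdf lam j - poisson_pmf lam j))); [intro; ring|].
  exact (is_series_minus _ _ _ _ (is_series_scal_l _ _ _ (is_series_poisson_le_prob lam Hl)) Htel).
Qed.

Lemma is_series_poisson_mean_cdf (lam : R) : 0 <= lam ->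
  is_series (fun j => INR j * poisson_pmf lam j * poisson_cdf lam j)
    (lam * (poisson_le_prob lam + poisson_succ_prob lam)).
Proof.
  intro Hl. apply is_series_decr_1_R.
  replace (_ - _) with (lam * (poisson_le_prob lam + poisson_succ_prob lam)) by (simpl; ring).
  apply (is_series_ext_R (fun j => lam * (poisson_pmf lam j * poisson_cdf lam j
                                    + poisson_pmf lam j * poisson_pmf lam (S j)))).
  - intro j. rewrite poisson_pmf_S, poisson_cdf_S. ring.
  - exact (is_series_scal_l _ _ _ (is_series_plus _ _ _ _
             (is_series_poisson_le_prob lam Hl) (is_series_poisson_succ_prob lam Hl))).
Qed.

Lemma one_sub_exp_opp_gt0 (lam : R) : 0 < lam -> 0 < 1 - exp (- lam).
Proof.
  intro Hl. enough (exp (- lam) < 1) by lra.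
  rewrite <- exp_0. apply exp_increasing. lra.
Qed.

Lemma ztp_pmf_S (lam : R) (k : nat) :
  ztp_pmf lam (S k) = / (1 - exp (- lam)) * poisson_pmf lam (S k).
Proof. reflexivity. Qed.

Lemma is_series_ztp_pmf (lam : R) : 0 < lam -> is_series (ztp_pmf lam) 1.
Proof.
  intro Hl. assert (Hq := one_sub_exp_opp_gt0 lam Hl).
  apply is_series_decr_1_R. replace (1 - ztp_pmf lam 0) with (/ (1 - exp (- lam)) * (1 - exp (- lam)))
    by (simpl; field; lra).
  apply (is_series_ext_R (fun k => / (1 - exp (- lam)) * poisson_pmf lam (S k))); [reflexivity|].
  assert (Htail := is_series_incr_1_R _ _ (is_series_poisson_pmf lam)).
  rewrite poisson_pmf_O in Htail.
  exact (is_series_scal_l _ _ _ Htail).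
Qed.

Lemma is_series_ztp_mean (lam : R) :
  is_series (fun k => INR k * ztp_pmf lam k) (/ (1 - exp (- lam)) * lam).
Proof.
  apply (is_series_ext_R (fun k => / (1 - exp (- lam)) * (INR k * poisson_pmf lam k))).
  - intros [|k]; [simpl; ring | rewrite ztp_pmf_S; ring].
  - exact (is_series_scal_l _ _ _ (is_series_poisson_mean lam)).
Qed.

Lemma sum_n_ztp_pmf (lam : R) (n : nat) :
  sum_n (ztp_pmf lam) n = / (1 - exp (- lam)) * (poisson_cdf lam n - exp (- lam)).
Proof.
  induction n as [|n IH].
  - rewrite sum_O, poisson_cdf_O, poisson_pmf_O. simpl. ring.
  - rewrite sum_Sn, IH, poisson_cdf_S, ztp_pmf_S. unfold plus; simpl. ring.
Qed.

Lemma lower_partial_moment_ztp_pmf (lam : R) (j : nat) :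
  lower_partial_moment (ztp_pmf lam) j
  = / (1 - exp (- lam)) * ((INR j - lam) * poisson_cdf lam j + lam * poisson_pmf lam j
                           - INR j * exp (- lam)).
Proof.
  induction j as [|j IH].
  - rewrite lower_partial_moment_O, poisson_cdf_O, poisson_pmf_O. simpl. ring.
  - rewrite lower_partial_moment_S, IH, sum_n_ztp_pmf, poisson_cdf_S.
    rewrite <- poisson_pmf_S, S_INR. ring.
Qed.

Lemma is_series_ztp_lower_partial_moment (lam : R) : 0 <= lam ->
  is_series (fun j => ztp_pmf lam j * lower_partial_moment (ztp_pmf lam) j)
    (/ (1 - exp (- lam)) * / (1 - exp (- lam))
     * (lam * (2 * poisson_le_prob lam + poisson_succ_prob lam - 1 - exp (- lam)))).
Proof.
  intro Hl.
  replace (lam * _) with (lam * (poisson_le_prob lam + poisson_succ_prob lam)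
                          - lam * poisson_le_prob lam + lam * (2 * poisson_le_prob lam - 1)
                          - exp (- lam) * lam) by ring.
  apply (is_series_ext_R (fun j => / (1 - exp (- lam)) * / (1 - exp (- lam))
     * (INR j * poisson_pmf lam j * poisson_cdf lam j - lam * (poisson_pmf lam j * poisson_cdf lam j)
        + lam * poisson_pmf lam j ^ 2 - exp (- lam) * (INR j * poisson_pmf lam j)))).
  - intros [|j].
    + rewrite lower_partial_moment_O, poisson_cdf_O. simpl. ring.
    + rewrite lower_partial_moment_ztp_pmf, ztp_pmf_S. ring.
  - exact (is_series_scal_l _ _ _ (is_series_minus _ _ _ _
             (is_series_plus _ _ _ _
                (is_series_minus _ _ _ _ (is_series_poisson_mean_cdf lam Hl)
                   (is_series_scal_l _ _ _ (is_series_poisson_le_prob lam Hl)))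
                (is_series_scal_l _ _ _ (is_series_poisson_pmf_sq lam Hl)))
             (is_series_scal_l _ _ _ (is_series_poisson_mean lam)))).
Qed.

Lemma poisson_cdf_at_0 (k : nat) : poisson_cdf 0 k = 1.
Proof.
  induction k as [|k IH].
  - rewrite poisson_cdf_O, poisson_pmf_O, Ropp_0. apply exp_0.
  - rewrite poisson_cdf_S, IH. unfold poisson_pmf. rewrite pow_ne_zero by lia.
    unfold Rdiv. ring.
Qed.

Lemma is_derive_poisson_pmf_O (t : R) :
  is_derive (fun s => poisson_pmf s 0) t (- poisson_pmf t 0).
Proof. unfold poisson_pmf. auto_derive; [exact I|]. simpl. field. Qed.

Lemma is_derive_poisson_pmf_S (k : nat) (t : R) :
  is_derive (fun s => poisson_pmf s (S k)) t (poisson_pmf t k - poisson_pmf t (S k)).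
Proof.
  unfold poisson_pmf. auto_derive; [exact I|].
  replace (match k with 0%nat => 1 | S _ => INR k + 1 end) with (INR (S k)) by (destruct k; reflexivity).
  replace (fact k + k * fact k)%nat with (fact (S k)) by reflexivity.
  rewrite fact_simpl, mult_INR. simpl pow.
  field. split; [apply INR_fact_neq_0 | apply not_0_INR; lia].
Qed.

Lemma is_derive_poisson_cdf (k : nat) (t : R) :
  is_derive (fun s => poisson_cdf s k) t (- poisson_pmf t k).
Proof.
  induction k as [|k IH].
  - apply (is_derive_ext (fun s => poisson_pmf s 0)); [intro; symmetry; apply poisson_cdf_O|].
    apply is_derive_poisson_pmf_O.
  - apply (is_derive_ext (fun s => poisson_cdf s k + poisson_pmf s (S k)));
      [intro; symmetry; apply poisson_cdf_S|].
    replace (- poisson_pmf t (S k))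
      with (- poisson_pmf t k + (poisson_pmf t k - poisson_pmf t (S k))) by ring.
    exact (is_derive_plus _ _ _ _ _ IH (is_derive_poisson_pmf_S k t)).
Qed.

Lemma is_RInt_poisson_pmf (k : nat) (x : R) :
  is_RInt (fun t => poisson_pmf t k) 0 x (1 - poisson_cdf x k).
Proof.
  replace (1 - poisson_cdf x k) with (minus (- poisson_cdf x k) (- poisson_cdf 0 k))
    by (rewrite poisson_cdf_at_0; unfold minus, plus, opp; simpl; ring).
  apply (is_RInt_derive (fun t => - poisson_cdf t k)).
  - intros t _. rewrite <- (Ropp_involutive (poisson_pmf t k)).
    exact (is_derive_opp _ _ _ (is_derive_poisson_cdf k t)).
  - intros t _. apply (@ex_derive_continuous R_AbsRing R_NormedModule).
    unfold poisson_pmf. auto_derive. exact I.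
Qed.

Definition bessel_I0_coeff (lam : R) (k : nat) : R :=
  lam ^ k / (INR (fact k) * INR (fact k)).

Lemma bessel_I0_coeff_ge0 (lam : R) (k : nat) : 0 <= lam -> 0 <= bessel_I0_coeff lam k.
Proof.
  intro Hl. unfold bessel_I0_coeff. apply Rdiv_le_0_compat; [now apply pow_le|].
  apply Rmult_lt_0_compat; apply INR_fact_lt_0.
Qed.

Lemma bessel_I0_sqrt (lam t : R) : 0 <= lam -> 0 <= t ->
  bessel_I 0 (2 * sqrt (lam * t)) = Series (fun k => bessel_I0_coeff lam k * t ^ k).
Proof.
  intros Hl Ht. unfold bessel_I. apply Series_ext. intro k.
  replace (2 * sqrt (lam * t) / 2) with (sqrt (lam * t)) by field.
  rewrite !Nat.add_0_l, pow_mult, pow2_sqrt by nra.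
  rewrite Rpow_mult_distr. unfold bessel_I0_coeff. field. apply INR_fact_neq_0.
Qed.

Lemma CV_disk_bessel_I0_coeff (lam r : R) : 0 <= lam -> CV_disk (bessel_I0_coeff lam) r.
Proof.
  intro Hl. unfold CV_disk.
  apply (@ex_series_le R_AbsRing R_CompleteNormedModule _
           (fun k => (lam * Rabs r) ^ k / INR (fact k))); [|eexists; apply is_series_exp].
  intro k. change (Rabs (Rabs (bessel_I0_coeff lam k * r ^ k)) <= (lam * Rabs r) ^ k / INR (fact k)).
  assert (Hf : 1 <= INR (fact k)) by apply (le_INR 1), lt_O_fact.
  assert (HX : 0 <= (lam * Rabs r) ^ k / INR (fact k))
    by (apply Rdiv_le_0_compat; [apply pow_le, Rmult_le_pos, Rabs_pos | ]; lra).
  rewrite Rabs_Rabsolu, Rabs_mult, Rabs_pos_eq, <- RPow_abs by now apply bessel_I0_coeff_ge0.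
  replace (bessel_I0_coeff lam k * Rabs r ^ k)
    with ((lam * Rabs r) ^ k / INR (fact k) * / INR (fact k))
    by (unfold bessel_I0_coeff; rewrite Rpow_mult_distr; field; lra).
  rewrite <- (Rmult_1_r ((lam * Rabs r) ^ k / INR (fact k))) at 2.
  apply Rmult_le_compat_l; [exact HX|].
  rewrite <- Rinv_1. apply Rinv_le_contravar; lra.
Qed.

Lemma bessel_integrand_tail (lam t : R) (N : nat) : 0 <= t <= lam ->
  Rabs (bessel_I 0 (2 * sqrt (lam * t)) * exp (- t)
        - sum_n (fun k => lam ^ k / INR (fact k) * poisson_pmf t k) N)
  <= Series (fun k => bessel_I0_coeff lam k * lam ^ k)
     - sum_n (fun k => bessel_I0_coeff lam k * lam ^ k) N.
Proof.
  intro Ht. assert (Hl : 0 <= lam) by lra.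
  rewrite bessel_I0_sqrt by lra.
  replace (sum_n (fun k => lam ^ k / INR (fact k) * poisson_pmf t k) N)
    with (sum_n (fun k => bessel_I0_coeff lam k * t ^ k) N * exp (- t)).
  2: { rewrite <- (sum_n_mult_r (K := R_Ring)). apply sum_n_ext. intro k.
       unfold bessel_I0_coeff, poisson_pmf. unfold mult; simpl. field. apply INR_fact_neq_0. }
  destruct (Series_tail_le (fun k => bessel_I0_coeff lam k * t ^ k)
              (fun k => bessel_I0_coeff lam k * lam ^ k) N) as [Hlo Hhi].
  - intro k. generalize (bessel_I0_coeff_ge0 lam k Hl). intro.
    split; [apply Rmult_le_pos; [lra | apply pow_le; lra]|].
    apply Rmult_le_compat_l; [lra | apply pow_incr; lra].
  - apply ex_series_Rabs, CV_disk_bessel_I0_coeff, Hl.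
  - apply ex_series_Rabs, CV_disk_bessel_I0_coeff, Hl.
  - assert (He : 0 < exp (- t) <= 1).
    { split; [apply exp_pos|]. rewrite <- exp_0.
      destruct (Req_dec t 0) as [->|]; [rewrite Ropp_0; lra | left; apply exp_increasing; lra]. }
    rewrite <- Rmult_minus_distr_r, Rabs_pos_eq by nra. nra.
Qed.

Lemma ex_RInt_bessel_integrand (lam : R) : 0 <= lam ->
  ex_RInt (fun t => bessel_I 0 (2 * sqrt (lam * t)) * exp (- t)) 0 lam.
Proof.
  intro Hl. apply (ex_RInt_ext (fun t => PSeries (bessel_I0_coeff lam) t * exp (- t))).
  - intros t Ht. rewrite Rmin_left, Rmax_right in Ht by lra.
    rewrite bessel_I0_sqrt by lra. reflexivity.
  - apply (@ex_RInt_continuous R_CompleteNormedModule). intros z _.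
    apply (@continuous_mult R_UniformSpace R_AbsRing (PSeries (bessel_I0_coeff lam)) (fun t => exp (- t))).
    + apply continuity_pt_filterlim, PSeries_continuity.
      rewrite (CV_radius_infinite _ (fun r => CV_disk_bessel_I0_coeff lam r Hl)). exact I.
    + apply (@ex_derive_continuous R_AbsRing R_NormedModule). auto_derive. exact I.
Qed.

Lemma poisson_bessel_integral (lam : R) : 0 <= lam ->
  exp (- lam) * RInt (fun t => bessel_I 0 (2 * sqrt (lam * t)) * exp (- t)) 0 lam
  = 1 - poisson_le_prob lam.
Proof.
  intro Hl. set (J := RInt (fun t => bessel_I 0 (2 * sqrt (lam * t)) * exp (- t)) 0 lam).
  assert (HJ : is_series (fun k => lam ^ k / INR (fact k) * (1 - poisson_cdf lam k)) J).
  { apply (is_series_RInt_uniform (fun k t => lam ^ k / INR (fact k) * poisson_pmf t k) _ _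
             (fun N => Series (fun k => bessel_I0_coeff lam k * lam ^ k)
                       - sum_n (fun k => bessel_I0_coeff lam k * lam ^ k) N)).
    - exact Hl.
    - now apply ex_RInt_bessel_integrand.
    - intro k. exact (is_RInt_scal _ _ _ _ _ (is_RInt_poisson_pmf k lam)).
    - intros N t Ht. now apply bessel_integrand_tail.
    - replace (Finite 0) with (Finite (Series (fun k => bessel_I0_coeff lam k * lam ^ k)
                                       - Series (fun k => bessel_I0_coeff lam k * lam ^ k)))
        by (f_equal; ring).
      apply is_lim_seq_minus'; [apply is_lim_seq_const|].
      apply Series_correct, ex_series_Rabs, CV_disk_bessel_I0_coeff, Hl. }
  assert (HeJ : is_series (fun k => poisson_pmf lam k - poisson_pmf lam k * poisson_cdf lam k)
                  (exp (- lam) * J)).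
  { apply (is_series_ext_R (fun k => exp (- lam) * (lam ^ k / INR (fact k) * (1 - poisson_cdf lam k)))).
    - intro k. unfold poisson_pmf. field. apply INR_fact_neq_0.
    - exact (is_series_scal_l _ _ _ HJ). }
  rewrite <- (is_series_unique _ _ HeJ). apply is_series_unique.
  exact (is_series_minus _ _ _ _ (is_series_poisson_pmf lam) (is_series_poisson_le_prob lam Hl)).
Qed.

Lemma bessel_I1_double (lam : R) :
  exp (- (2 * lam)) * bessel_I 1 (2 * lam) = poisson_succ_prob lam.
Proof.
  unfold bessel_I, poisson_succ_prob. rewrite <- Series_scal_l. apply Series_ext. intro k.
  replace (2 * lam / 2) with lam by field.
  replace (1 + 2 * k)%nat with (k + S k)%nat by lia.
  replace (- (2 * lam)) with (- lam + - lam) by ring.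
  rewrite pow_add, exp_plus. unfold poisson_pmf. change (fact (1 + k)) with (fact (S k)).
  field. split; apply INR_fact_neq_0.
Qed.

Theorem mainTheorem1 (lam : R) (hlam : 0 < lam) :
  gini_nat (ztp_pmf lam) =
    1 - 2 * exp (- lam) / (1 - exp (- lam))
          * RInt (fun t => bessel_I 0 (2 * sqrt (lam * t)) * exp (- t)) 0 lam
      + exp (- (2 * lam)) / (1 - exp (- lam)) * bessel_I 1 (2 * lam).
Proof.
  assert (Hq := one_sub_exp_opp_gt0 lam hlam).
  rewrite (gini_nat_of_lower_partial_moments _ _ _ (is_series_ztp_pmf lam hlam)
             (is_series_ztp_mean lam) (is_series_ztp_lower_partial_moment lam (Rlt_le _ _ hlam))).
  replace (2 * exp (- lam) / (1 - exp (- lam))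
             * RInt (fun t => bessel_I 0 (2 * sqrt (lam * t)) * exp (- t)) 0 lam)
    with (2 / (1 - exp (- lam))
          * (exp (- lam) * RInt (fun t => bessel_I 0 (2 * sqrt (lam * t)) * exp (- t)) 0 lam))
    by (field; lra).
  replace (exp (- (2 * lam)) / (1 - exp (- lam)) * bessel_I 1 (2 * lam))
    with (/ (1 - exp (- lam)) * (exp (- (2 * lam)) * bessel_I 1 (2 * lam))) by (field; lra).
  rewrite poisson_bessel_integral, bessel_I1_double by lra.
  field. lra.
Qed.
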